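(* Let $h:S\to S$ be a homeomorphism of the Riemann sphere $S=\mathbb{C}\cup\{\infty\}$ with $h(\infty)=\infty$, and suppose there are nice lattices $\Gamma_1,\Gamma_2$ with $h\Gamma_1h^{-1}=\Gamma_2$. If two distinct directions are good for $h$, then $h\in\mathcal{I}$.
   Context: $\mathcal{I}$ is the isometry group of hyperbolic $3$-space $\mathbb{H}^3=\mathbb{C}\times(0,\infty)$, identified (via boundary extension) with the group of conformal transformations of $S$ (homeomorphisms of $S$ mapping generalized circles to generalized circles). A nice lattice is a subgroup $\Gamma\subset\mathcal{I}$ acting freely, properly discontinuously and cocompactly on $\mathbb{H}^3$. A line $L\subset\mathbb{C}$ is good for $h$ if $h(L)$ is a line and $h|_L:L\to h(L)$ is an affine map (it scales lengths by a constant positive factor). A direction $D$ (a parallel class of lines in $\mathbb{C}$) is good for $h$ if every line of direction $D$ is good for $h$. *)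

From Stdlib Require Import Reals List.
From Coquelicot Require Import Coquelicot.
Open Scope R_scope.

(** * The Riemann sphere S = C ∪ {∞}; [None] is the point ∞. *)
Definition Sph : Type := option C.

(** Sequential convergence in S (S is metrizable, so sequential notions suffice). *)
Definition S_conv (u : nat -> Sph) (l : Sph) : Prop :=
  match l with
  | Some w => is_lim_seq (fun n => match u n with
                                   | Some z => Cmod (z - w)%C
                                   | None => 1 end) 0
  | None => is_lim_seq (fun n => match u n with
                                 | Some z => / (1 + Cmod z)
                                 | None => 0 end) 0
  end.

Definition S_cont (f : Sph -> Sph) : Prop :=
  forall u l, S_conv u l -> S_conv (fun n => f (u n)) (f l).

Definition homeomorphism (f : Sph -> Sph) : Prop :=
  exists g : Sph -> Sph,
    (forall x, g (f x) = x) /\ (forall y, f (g y) = y) /\ S_cont f /\ S_cont g.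

Definition line (p v : C) : C -> Prop := fun z => exists s : R, z = (p + RtoC s * v)%C.

Definition is_line (L : C -> Prop) : Prop :=
  exists p v : C, v <> 0%C /\ forall z, L z <-> line p v z.

Definition gen_circle (A : Sph -> Prop) : Prop :=
  (exists (c : C) (r : R), 0 < r /\
     forall x, A x <-> exists z, x = Some z /\ Cmod (z - c)%C = r)
  \/ (exists L : C -> Prop, is_line L /\
     forall x, A x <-> (x = None \/ exists z, x = Some z /\ L z)).

Definition image (f : Sph -> Sph) (A : Sph -> Prop) : Sph -> Prop :=
  fun y => exists x, A x /\ f x = y.

(** Conformal transformations of S: homeomorphisms mapping generalized
    circles to generalized circles.  Via boundary extension this is the
    isometry group I of H^3. *)
Definition conformal (f : Sph -> Sph) : Prop :=
  homeomorphism f /\ forall A, gen_circle A -> gen_circle (image f A).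

Record H3 : Type := mkH3 { hz : C; ht : R; ht_pos : 0 < ht }.

Definition acosh (x : R) : R := ln (x + sqrt (x ^ 2 - 1)).

Definition hdist (p q : H3) : R :=
  acosh (1 + (Cmod (hz p - hz q)%C ^ 2 + (ht p - ht q) ^ 2) / (2 * ht p * ht q)).

Definition h_isometry (F : H3 -> H3) : Prop :=
  (forall p q, hdist (F p) (F q) = hdist p q) /\ (forall q, exists p, F p = q).

Definition h_conv (x : nat -> H3) (p : H3) : Prop :=
  is_lim_seq (fun n => hdist (x n) p) 0.

(** convergence of a sequence in H^3 to a point of the boundary S
    (topology of the compactification H^3 ∪ S) *)
Definition to_bdry (x : nat -> H3) (zeta : Sph) : Prop :=
  match zeta with
  | Some w => is_lim_seq (fun n => Cmod (hz (x n) - w)%C) 0 /\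
              is_lim_seq (fun n => ht (x n)) 0
  | None => is_lim_seq (fun n => Cmod (hz (x n)) + ht (x n)) p_infty
  end.

Definition extends (g : Sph -> Sph) (F : H3 -> H3) : Prop :=
  h_isometry F /\
  forall (x : nat -> H3) (zeta : Sph), to_bdry x zeta -> to_bdry (fun n => F (x n)) (g zeta).

Definition h_compact (K : H3 -> Prop) : Prop :=
  forall x : nat -> H3, (forall n, K (x n)) ->
    exists phi : nat -> nat, (forall n, (phi n < phi (S n))%nat) /\
      exists p, K p /\ h_conv (fun n => x (phi n)) p.

(** subgroups of I (elements of I seen as conformal maps of S) *)
Definition subgroup_I (G : (Sph -> Sph) -> Prop) : Prop :=
  (forall g, G g -> conformal g) /\
  G (fun x => x) /\
  (forall g1 g2, G g1 -> G g2 -> G (fun x => g1 (g2 x))) /\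
  (forall g, G g -> exists g', G g' /\ (forall x, g (g' x) = x) /\ (forall x, g' (g x) = x)).

(** nice lattice: a subgroup of I whose action on H^3 (by the isometric
    extensions of its elements) is free, properly discontinuous and cocompact. *)
Definition nice_lattice (G : (Sph -> Sph) -> Prop) : Prop :=
  subgroup_I G /\
  exists act : (Sph -> Sph) -> H3 -> H3,
    (forall g, G g -> extends g (act g)) /\
    (forall g x, G g -> act g x = x -> g = (fun y => y)) /\
    (forall K, h_compact K ->
       exists l : list (Sph -> Sph),
         forall g, G g -> (exists x, K x /\ K (act g x)) -> In g l) /\
    (exists K, h_compact K /\ forall y, exists g x, G g /\ K x /\ act g x = y).

Definition good_line (h : Sph -> Sph) (L : C -> Prop) : Prop :=
  (exists L' : C -> Prop, is_line L' /\
     forall y, (exists z, L z /\ h (Some z) = y) <-> (exists w, y = Some w /\ L' w)) /\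
  (exists lam : R, 0 < lam /\
     forall x y hx hy, L x -> L y -> h (Some x) = Some hx -> h (Some y) = Some hy ->
       Cmod (hx - hy)%C = lam * Cmod (x - y)%C).

Definition good_direction (h : Sph -> Sph) (v : C) : Prop :=
  forall p : C, good_line h (line p v).

(* Two good directions make h real-affine on C.  Along a good line h multiplies all
   distances by one constant, and a map of a line into the plane with that property is
   affine; the two families of lines make h biaffine in the coordinates of the two
   directions, and injectivity kills the cross term.

   A nice lattice cannot fix ∞.  Otherwise each element g acts on C as a similarity of
   ratio λ_g and on H^3 by (z, t) ↦ (g z, λ_g t).  Cocompactness yields an element with
   λ ≠ 1, hence a contraction g1 with a fixed point z0; the conjugates g1^n g g1^-n of any
   g move (z0, 1) along a convergent sequence, so by proper discontinuity two of them
   coincide, which forces g z0 = z0.  But elements fixing both ∞ and z0 cannot carry a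
   compact set to points of height 1 arbitrarily far from z0, contradicting cocompactness.

   So some g in Γ1 sends ∞ to a finite point w.  Then g^-1 maps a round circle C through w
   to a line, h keeps it a line, and h g h^-1 in Γ2 maps that line onto h(C), which avoids
   ∞ and is therefore a round circle.  A real-affine map taking a round circle onto a
   round circle is a similarity, hence conformal. *)

From Stdlib Require Import Reals List Lra Lia Psatz Classical ClassicalEpsilon FinFun.
From Coquelicot Require Import Coquelicot.
Open Scope R_scope.

Lemma Cmod_sq_eq (z : C) (r : R) : 0 <= r -> fst z ^ 2 + snd z ^ 2 = r ^ 2 -> Cmod z = r.
Proof. intros Hr E. unfold Cmod. rewrite E. apply sqrt_pow2, Hr. Qed.

Lemma Cmod_scale (s : R) (v : C) : Cmod (RtoC s * v) = Rabs s * Cmod v.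
Proof. rewrite Cmod_mult, Cmod_R. reflexivity. Qed.

Definition cross (u v : C) : R := fst u * snd v - snd u * fst v.

Lemma cross_eq0_collinear (u v : C) : v <> 0%C -> cross u v = 0 -> exists r : R, u = (RtoC r * v)%C.
Proof.
  intros Hv D. unfold cross in D.
  assert (Nv : 0 < fst v ^ 2 + snd v ^ 2).
  { rewrite <- Cmod2_alt. apply pow_lt, Cmod_gt_0, Hv. }
  set (N := fst v ^ 2 + snd v ^ 2) in *.
  set (X := fst u * fst v + snd u * snd v).
  exists (X / N).
  assert (E1 : fst u * N = X * fst v).
  { transitivity (X * fst v + snd v * (fst u * snd v - snd u * fst v)); [unfold N, X; ring|].
    rewrite D. ring. }
  assert (E2 : snd u * N = X * snd v).
  { transitivity (X * snd v - fst v * (fst u * snd v - snd u * fst v)); [unfold N, X; ring|].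
    rewrite D. ring. }
  apply injective_projections; simpl; apply (Rmult_eq_reg_r N); try lra.
  - rewrite E1. field. lra.
  - rewrite E2. field. lra.
Qed.

Lemma C_basis_coords (v1 v2 z : C) : cross v1 v2 <> 0 ->
  z = (RtoC (cross z v2 / cross v1 v2) * v1 + RtoC (cross v1 z / cross v1 v2) * v2)%C.
Proof. intros D. unfold cross in *. apply injective_projections; simpl; field; auto. Qed.

Lemma affine_of_dists (P0 P1 Ps : C) (s D : R) :
  Cmod (Ps - P0) = Rabs s * D -> Cmod (P1 - P0) = D -> Cmod (Ps - P1) = Rabs (s - 1) * D ->
  Ps = (P0 + RtoC s * (P1 - P0))%C.
Proof.
  intros Hs H1 Hs1.
  replace (Ps - P1)%C with ((Ps - P0) - (P1 - P0))%C in Hs1 by ring.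
  replace Ps with (P0 + (Ps - P0))%C at 1 by ring.
  generalize dependent (P1 - P0)%C; generalize dependent (Ps - P0)%C.
  intros [u1 u2] Hs [w1 w2] H1 Hs1.
  apply (f_equal (fun x => x ^ 2)) in Hs, H1, Hs1.
  rewrite Cmod2_alt, Rpow_mult_distr, pow2_abs in Hs, Hs1. rewrite Cmod2_alt in H1.
  simpl in Hs, H1, Hs1.
  (* [|u - s w|^2] is a combination of the three squared distances. *)
  assert (Hdefect : (u1 - s * w1) ^ 2 + (u2 - s * w2) ^ 2 = 0).
  { transitivity ((1 - s) * (u1 * u1 + u2 * u2) + (s * s - s) * (w1 * w1 + w2 * w2)
                  + s * ((u1 - w1) * (u1 - w1) + (u2 - w2) * (u2 - w2))); [ring|].
    replace (u1 * u1 + u2 * u2) with (s * s * (D * D)) by lra.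
    replace (w1 * w1 + w2 * w2) with (D * D) by lra.
    replace ((u1 - w1) * (u1 - w1) + (u2 - w2) * (u2 - w2)) with ((s - 1) * (s - 1) * (D * D))
      by lra.
    ring. }
  pose proof (pow2_ge_0 (u1 - s * w1)). pose proof (pow2_ge_0 (u2 - s * w2)).
  assert (Z1 : u1 - s * w1 = 0) by nra.
  assert (Z2 : u2 - s * w2 = 0) by nra.
  f_equal. apply injective_projections; simpl; lra.
Qed.

Lemma cross_basis_l (v1 v2 : C) (s r : R) :
  cross (RtoC s * v1 + RtoC r * v2)%C v2 = s * cross v1 v2.
Proof. unfold cross; simpl; ring. Qed.

Lemma cross_basis_r (v1 v2 : C) (s r : R) :
  cross v1 (RtoC s * v1 + RtoC r * v2)%C = r * cross v1 v2.
Proof. unfold cross; simpl; ring. Qed.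

(** With a nonzero cross term either a whole horizontal line collapses to a point or
    two horizontal lines meet. *)
Lemma biaffine_inj_cross_term_0 (a b d : C) :
  (forall s r s' r', (RtoC s * a + RtoC r * b + RtoC (s * r) * d =
                      RtoC s' * a + RtoC r' * b + RtoC (s' * r') * d)%C -> s = s' /\ r = r') ->
  d = 0%C.
Proof.
  intros Hinj. apply NNPP. intros Hd.
  destruct (Req_dec (cross a d) 0) as [Dad | Dad].
  - destruct (cross_eq0_collinear a d Hd Dad) as [mu Ha].
    assert (Hcollapse : 0 = 1).
    { apply (Hinj 0 (- mu) 1 (- mu)). rewrite Ha, !RtoC_mult, RtoC_opp. ring. }
    lra.
  - pose proof (C_basis_coords a d b Dad) as Hb.
    set (s1 := - (cross a b / cross a d)) in Hb.
    set (s0 := cross b d / cross a d + s1) in Hb.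
    assert (Hmeet : 0 = 1).
    { apply (Hinj s0 0 s1 1). rewrite Hb at 2. unfold s0, s1.
      rewrite !RtoC_mult, !RtoC_plus, !RtoC_opp. ring. }
    lra.
Qed.

(** * Good directions *)

Lemma homeomorphism_inj (f : Sph -> Sph) : homeomorphism f -> forall x y, f x = f y -> x = y.
Proof. intros [g [gf _]] x y E. rewrite <- (gf x), <- (gf y), E. reflexivity. Qed.

(** The junk value [0] never occurs when [h] is a bijection fixing [∞]. *)
Definition onC (h : Sph -> Sph) (z : C) : C :=
  match h (Some z) with Some w => w | None => 0%C end.

Lemma onC_of_Some (f : Sph -> Sph) (z w : C) : f (Some z) = Some w -> onC f z = w.
Proof. intros E. unfold onC. rewrite E. reflexivity. Qed.

Definition real_affine (H : C -> C) (c al be : C) : Prop :=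
  forall z, H z = (c + RtoC (fst z) * al + RtoC (snd z) * be)%C.

Section FixingInfinity.

Variable h : Sph -> Sph.
Hypothesis h_homeo : homeomorphism h.
Hypothesis h_infty : h None = None.

Lemma onC_Some (z : C) : h (Some z) = Some (onC h z).
Proof.
  unfold onC. destruct (h (Some z)) eqn:E; auto.
  rewrite <- h_infty in E. apply homeomorphism_inj in E; [discriminate | exact h_homeo].
Qed.

Lemma onC_inj (z w : C) : onC h z = onC h w -> z = w.
Proof.
  intros E. assert (E' : h (Some z) = h (Some w)) by (rewrite !onC_Some, E; reflexivity).
  apply homeomorphism_inj in E'; [congruence | exact h_homeo].
Qed.

Lemma onC_surj (w : C) : exists z, onC h z = w.
Proof.
  destruct h_homeo as [g [_ [hg _]]]. specialize (hg (Some w)).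
  destruct (g (Some w)) as [z|].
  - exists z. rewrite onC_Some in hg. congruence.
  - rewrite h_infty in hg. discriminate.
Qed.

Lemma iter_Some (n : nat) (z : C) : Nat.iter n h (Some z) = Some (Nat.iter n (onC h) z).
Proof. induction n as [|n IH]; simpl; [|rewrite IH, onC_Some]; auto. Qed.

Lemma good_line_affine (p v : C) : good_line h (line p v) ->
  forall s, onC h (p + RtoC s * v) = (onC h p + RtoC s * (onC h (p + v) - onC h p))%C.
Proof.
  intros [_ [lam [_ Hscale]]] s.
  assert (Hdist : forall s1 s2, Cmod (onC h (p + RtoC s1 * v) - onC h (p + RtoC s2 * v)) =
                               Rabs (s1 - s2) * (lam * Cmod v)).
  { intros s1 s2. rewrite (Hscale _ _ _ _ (ex_intro _ s1 eq_refl) (ex_intro _ s2 eq_refl)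
                           (onC_Some _) (onC_Some _)).
    replace (p + RtoC s1 * v - (p + RtoC s2 * v))%C with (RtoC (s1 - s2) * v)%C
      by (rewrite RtoC_minus; ring).
    rewrite Cmod_scale. ring. }
  assert (E0 : (p + RtoC 0 * v)%C = p) by ring.
  assert (E1 : (p + RtoC 1 * v)%C = (p + v)%C) by ring.
  apply affine_of_dists with (D := lam * Cmod v).
  - rewrite <- E0 at 2. rewrite Hdist. f_equal. f_equal. ring.
  - rewrite <- E0 at 2. rewrite <- E1. rewrite Hdist. replace (1 - 0) with 1 by ring.
    rewrite Rabs_R1. ring.
  - rewrite <- E1. apply Hdist.
Qed.

Lemma good_directions_biaffine (v1 v2 : C) :
  good_direction h v1 -> good_direction h v2 ->
  forall s r, onC h (RtoC s * v1 + RtoC r * v2) =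
    (onC h 0 + RtoC s * (onC h v1 - onC h 0) + RtoC r * (onC h v2 - onC h 0)
     + RtoC (s * r) * (onC h (v1 + v2) - onC h v1 - onC h v2 + onC h 0))%C.
Proof.
  intros G1 G2 s r.
  pose proof (good_line_affine _ _ (G1 (RtoC r * v2)%C) s) as Hrow.
  pose proof (good_line_affine _ _ (G2 0%C) r) as Hcol0.
  pose proof (good_line_affine _ _ (G2 v1) r) as Hcol1.
  replace (0 + RtoC r * v2)%C with (RtoC r * v2)%C in Hcol0 by ring.
  replace (0 + v2)%C with v2 in Hcol0 by ring.
  replace (RtoC r * v2 + v1)%C with (v1 + RtoC r * v2)%C in Hrow by ring.
  replace (RtoC s * v1 + RtoC r * v2)%C with (RtoC r * v2 + RtoC s * v1)%C by ring.
  rewrite Hrow, Hcol1, Hcol0, RtoC_mult. ring.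
Qed.

End FixingInfinity.




Lemma good_directions_real_affine (h : Sph -> Sph) (v1 v2 : C) :
  homeomorphism h -> h None = None -> v1 <> 0%C -> (forall r : R, v2 <> (RtoC r * v1)%C) ->
  good_direction h v1 -> good_direction h v2 ->
  exists c al be, real_affine (onC h) c al be.
Proof.
  intros Hh HN Hv1 Hind G1 G2.
  assert (D : cross v1 v2 <> 0).
  { intros D. destruct (cross_eq0_collinear v2 v1 Hv1) as [r Hr]; [unfold cross in *; lra|].
    exact (Hind r Hr). }
  pose proof (good_directions_biaffine h Hh HN v1 v2 G1 G2) as Hbi.
  set (c := onC h 0) in Hbi. set (a := (onC h v1 - c)%C) in Hbi.
  set (b := (onC h v2 - c)%C) in Hbi.
  set (d := (onC h (v1 + v2) - onC h v1 - onC h v2 + c)%C) in Hbi.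
  assert (d0 : d = 0%C).
  { apply biaffine_inj_cross_term_0 with a b. intros s r s' r' E.
    assert (Ez : (RtoC s * v1 + RtoC r * v2)%C = (RtoC s' * v1 + RtoC r' * v2)%C).
    { apply (onC_inj h Hh HN). rewrite !Hbi.
      transitivity (c + (RtoC s * a + RtoC r * b + RtoC (s * r) * d))%C; [ring|].
      rewrite E. ring. }
    pose proof (f_equal (fun z => cross z v2) Ez) as Es. cbv beta in Es.
    pose proof (f_equal (cross v1) Ez) as Er.
    rewrite !cross_basis_l in Es. rewrite !cross_basis_r in Er.
    split; apply (Rmult_eq_reg_r (cross v1 v2)); auto. }
  exists c, (RtoC (snd v2 / cross v1 v2) * a - RtoC (snd v1 / cross v1 v2) * b)%C,
            (RtoC (fst v1 / cross v1 v2) * b - RtoC (fst v2 / cross v1 v2) * a)%C.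
  intros z. rewrite (C_basis_coords v1 v2 z D) at 1. rewrite Hbi, d0.
  unfold cross in *. apply injective_projections; simpl; field; auto.
Qed.

(** * Real-affine maps and circles *)

Section RealAffineMap.

Variables (H : C -> C) (c al be : C).
Hypothesis H_affine : real_affine H c al be.
Hypothesis H_inj : forall z w, H z = H w -> z = w.

Lemma real_affine_line (p v : C) (s : R) :
  H (p + RtoC s * v) = (H p + RtoC s * (RtoC (fst v) * al + RtoC (snd v) * be))%C.
Proof. rewrite !H_affine. apply injective_projections; simpl; ring. Qed.

Lemma real_affine_dir_neq0 (v : C) : v <> 0%C -> (RtoC (fst v) * al + RtoC (snd v) * be)%C <> 0%C.
Proof.
  intros Hv E. apply Hv.
  assert (Hv0 : (0 + RtoC 1 * v)%C = 0%C).
  { apply H_inj. rewrite real_affine_line, E. ring. }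
  rewrite <- Hv0. ring.
Qed.

Lemma real_affine_cross_neq0 : cross al be <> 0.
Proof.
  intros D. destruct (classic (be = 0%C)) as [Hbe | Hbe].
  - apply (real_affine_dir_neq0 (0, 1)).
    + intros E. injection E. lra.
    + rewrite Hbe. simpl. ring.
  - destruct (cross_eq0_collinear al be Hbe D) as [mu Hal].
    apply (real_affine_dir_neq0 (1, - mu)).
    + intros E. injection E. lra.
    + rewrite Hal. simpl. rewrite RtoC_opp. ring.
Qed.

(** Sampling the unit circle at [±1] and [±i] forces [H w1 = c']; the point [(3 + 4i)/5]
    then gives orthogonality. *)
Lemma real_affine_circle_coeffs (w1 c' : C) (r : R) :
  (forall z, Cmod (z - w1) = 1 -> Cmod (H z - c') = r) ->
  fst al ^ 2 + snd al ^ 2 = r ^ 2 /\ fst be ^ 2 + snd be ^ 2 = r ^ 2 /\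
  fst al * fst be + snd al * snd be = 0.
Proof.
  intros Hcirc.
  set (q := (H w1 - c')%C).
  assert (Hsample : forall ex ey, ex ^ 2 + ey ^ 2 = 1 ->
    (ex * fst al + ey * fst be + fst q) ^ 2 + (ex * snd al + ey * snd be + snd q) ^ 2 = r ^ 2).
  { intros ex ey He.
    assert (Hz : Cmod (w1 + RtoC 1 * (ex, ey) - w1) = 1).
    { apply Cmod_sq_eq; [lra|]. simpl. lra. }
    specialize (Hcirc _ Hz). rewrite real_affine_line in Hcirc.
    rewrite <- Hcirc, Cmod2_alt. unfold q. simpl. ring. }
  pose proof (Hsample 1 0 ltac:(ring)) as S1. pose proof (Hsample (-1) 0 ltac:(ring)) as S2.
  pose proof (Hsample 0 1 ltac:(ring)) as S3. pose proof (Hsample 0 (-1) ltac:(ring)) as S4.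
  pose proof (Hsample (3/5) (4/5) ltac:(field)) as S5.
  assert (Qa : fst al * fst q + snd al * snd q = 0) by lra.
  assert (Qb : fst be * fst q + snd be * snd q = 0) by lra.
  pose proof real_affine_cross_neq0 as D. unfold cross in D.
  assert (Q1 : fst q * (fst al * snd be - snd al * fst be) = 0).
  { transitivity (snd be * (fst al * fst q + snd al * snd q)
                  - snd al * (fst be * fst q + snd be * snd q));
      [ring|]. rewrite Qa, Qb. ring. }
  assert (Q2 : snd q * (fst al * snd be - snd al * fst be) = 0).
  { transitivity (fst al * (fst be * fst q + snd be * snd q)
                  - fst be * (fst al * fst q + snd al * snd q));
      [ring|]. rewrite Qa, Qb. ring. }
  apply Rmult_integral in Q1 as [Q1 | Q1]; [|contradiction].
  apply Rmult_integral in Q2 as [Q2 | Q2]; [|contradiction].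
  rewrite Q1, Q2 in S1, S3, S5.
  split; [|split]; nra.
Qed.

Lemma real_affine_similarity (r : R) : 0 <= r ->
  fst al ^ 2 + snd al ^ 2 = r ^ 2 -> fst be ^ 2 + snd be ^ 2 = r ^ 2 ->
  fst al * fst be + snd al * snd be = 0 ->
  forall z w, Cmod (H z - H w) = r * Cmod (z - w).
Proof.
  intros Hr Ha Hb Hab z w.
  apply Cmod_sq_eq; [apply Rmult_le_pos; auto; apply Cmod_ge_0|].
  rewrite Rpow_mult_distr, Cmod2_alt, !H_affine. simpl.
  set (dx := fst z - fst w). set (dy := snd z - snd w).
  transitivity (dx ^ 2 * (fst al ^ 2 + snd al ^ 2) + dy ^ 2 * (fst be ^ 2 + snd be ^ 2)
                + 2 * dx * dy * (fst al * fst be + snd al * snd be)); [unfold dx, dy; ring|].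
  rewrite Ha, Hb, Hab. unfold Re, Im, dx, dy. simpl. ring.
Qed.

End RealAffineMap.

Lemma gen_circle_ext (A B : Sph -> Prop) : gen_circle A -> (forall x, A x <-> B x) -> gen_circle B.
Proof.
  intros [[c [r [Hr HA]]] | [L [HL HA]]] E.
  - left. exists c, r. split; auto. intros x. rewrite <- E. auto.
  - right. exists L. split; auto. intros x. rewrite <- E. auto.
Qed.

Section RealAffineOnSphere.

Variable h : Sph -> Sph.
Hypothesis h_homeo : homeomorphism h.
Hypothesis h_infty : h None = None.
Variables (c al be : C).
Hypothesis h_affine : real_affine (onC h) c al be.

Lemma real_affine_image_line (A : Sph -> Prop) (L : C -> Prop) :
  is_line L -> (forall x, A x <-> (x = None \/ exists z, x = Some z /\ L z)) ->
  gen_circle (image h A).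
Proof.
  intros [p [v [Hv HL]]] HA.
  set (Lv := (RtoC (fst v) * al + RtoC (snd v) * be)%C).
  right. exists (line (onC h p) Lv). split.
  { exists (onC h p), Lv. split; [|tauto].
    apply (real_affine_dir_neq0 (onC h) c al be h_affine (onC_inj h h_homeo h_infty) v Hv). }
  intros x. split.
  - intros [x0 [Ax0 <-]]. apply HA in Ax0 as [-> | [z0 [-> Lz0]]]; [left; auto | right].
    apply HL in Lz0 as [s ->]. exists (onC h (p + RtoC s * v)). split; [apply onC_Some; auto|].
    exists s. apply (real_affine_line (onC h) c al be h_affine).
  - intros [-> | [z [-> [s ->]]]].
    + exists None. split; auto. apply HA. left; auto.
    + exists (Some (p + RtoC s * v)%C). split.
      * apply HA. right. exists (p + RtoC s * v)%C. split; auto. apply HL. exists s; auto.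
      * rewrite onC_Some by auto. f_equal. apply (real_affine_line (onC h) c al be h_affine).
Qed.

Lemma conformal_of_real_affine_similarity (rho : R) : 0 < rho ->
  (forall z w, Cmod (onC h z - onC h w) = rho * Cmod (z - w)) -> conformal h.
Proof.
  intros Hrho Hsim. split; auto.
  intros A [[c0 [r0 [Hr0 HA]]] | [L [HL HA]]]; [|apply (real_affine_image_line A L); auto].
  left. exists (onC h c0), (rho * r0). split; [nra|].
  intros x. split.
  - intros [x0 [Ax0 <-]]. apply HA in Ax0 as [z0 [-> Hz0]].
    exists (onC h z0). split; [apply onC_Some; auto|]. rewrite Hsim, Hz0. reflexivity.
  - intros [z [-> Hz]]. destruct (onC_surj h h_homeo h_infty z) as [z0 <-].
    exists (Some z0). split; [|apply onC_Some; auto].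
    apply HA. exists z0. split; auto. rewrite Hsim in Hz. apply (Rmult_eq_reg_l rho); lra.
Qed.

End RealAffineOnSphere.

Lemma image_conj_image_inverse (h hinv g g' : Sph -> Sph) (A : Sph -> Prop) :
  (forall x, hinv (h x) = x) -> (forall x, g (g' x) = x) ->
  forall y, image (fun x => h (g (hinv x))) (image h (image g' A)) y <-> image h A y.
Proof.
  intros hinv_h gg' y. split.
  - intros [_ [[_ [[x [Ax <-]] <-]] <-]]. exists x. split; auto. rewrite hinv_h, gg'. reflexivity.
  - intros [x [Ax <-]]. exists (h (g' x)). split.
    + exists (g' x). split; auto. exists x; auto.
    + rewrite hinv_h, gg'. reflexivity.
Qed.

Lemma conformal_of_conjugation_moving_infinity (h : Sph -> Sph)
    (G1 G2 : (Sph -> Sph) -> Prop) (c al be : C) :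
  homeomorphism h -> h None = None -> subgroup_I G1 -> subgroup_I G2 ->
  (forall g, G2 g <-> exists g1, G1 g1 /\ forall x, g (h x) = h (g1 x)) ->
  real_affine (onC h) c al be ->
  (exists g w, G1 g /\ g None = Some w) ->
  conformal h.
Proof.
  intros Hh HN [Conf1 [_ [_ Inv1]]] [Conf2 _] Hconj Haff [g [w [Gg Hgw]]].
  destruct (Inv1 g Gg) as [g' [Gg' [gg' g'g]]].
  pose proof Hh as [hinv [hinv_h _]].
  set (Circ := fun x => exists z, x = Some z /\ Cmod (z - (w + 1)) = 1).
  assert (Hcirc : gen_circle Circ).
  { left. exists (w + 1)%C, 1. split; [lra|]. intros; unfold Circ; tauto. }
  assert (Hline : gen_circle (image h (image g' Circ))).
  { destruct (proj2 (Conf1 g' Gg') Circ Hcirc) as [[c0 [r0 [_ HA]]] | [L [HL HA]]].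
    - exfalso. assert (Hinf : image g' Circ None).
      { exists (Some w). split; [|rewrite <- Hgw; apply g'g].
        exists w. split; auto. replace (w - (w + 1))%C with (- (1))%C by ring.
        rewrite Cmod_opp, Cmod_1. reflexivity. }
      apply HA in Hinf as [z [E _]]. discriminate.
    - apply (real_affine_image_line h Hh HN c al be Haff _ L HL HA). }
  set (phi := fun x => h (g (hinv x))).
  assert (Gphi : G2 phi).
  { apply Hconj. exists g. split; auto. intros x. unfold phi. rewrite hinv_h. reflexivity. }
  assert (Hround : gen_circle (image h Circ)).
  { apply (gen_circle_ext _ _ (proj2 (Conf2 phi Gphi) _ Hline)).
    apply image_conj_image_inverse; auto. }
  destruct Hround as [[c' [r' [Hr' HA']]] | [L' [_ HA']]].
  - destruct (real_affine_circle_coeffs (onC h) c al be Haff (onC_inj h Hh HN) (w + 1)%C c' r')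
      as [Ha [Hb Hab]].
    + intros z Hz.
      assert (Him : image h Circ (Some (onC h z))).
      { exists (Some z). split; [exists z; auto | apply onC_Some; auto]. }
      apply HA' in Him as [z' [E Hz']]. injection E as ->. exact Hz'.
    + apply (conformal_of_real_affine_similarity h Hh HN c al be Haff r'); auto.
      apply (real_affine_similarity (onC h) c al be Haff); auto; lra.
  - exfalso. assert (Him : image h Circ None) by (apply HA'; left; auto).
    destruct Him as [x0 [[z [-> _]] Hz]]. rewrite onC_Some in Hz by auto. discriminate.
Qed.

(** * Isometries of hyperbolic space fixing ∞ *)

Definition cosh_hdist (p q : H3) : R :=
  1 + (Cmod (hz p - hz q) ^ 2 + (ht p - ht q) ^ 2) / (2 * ht p * ht q).

Lemma hdist_acosh (p q : H3) : hdist p q = acosh (cosh_hdist p q).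
Proof. reflexivity. Qed.

Lemma cosh_hdist_ge1 (p q : H3) : 1 <= cosh_hdist p q.
Proof.
  unfold cosh_hdist. pose proof (ht_pos p). pose proof (ht_pos q).
  enough (0 <= (Cmod (hz p - hz q) ^ 2 + (ht p - ht q) ^ 2) / (2 * ht p * ht q)) by lra.
  apply Rdiv_le_0_compat; [|apply Rmult_lt_0_compat; lra].
  pose proof (pow2_ge_0 (Cmod (hz p - hz q))). pose proof (pow2_ge_0 (ht p - ht q)). lra.
Qed.

Lemma cosh_hdist_alt (p q : H3) :
  cosh_hdist p q = (Cmod (hz p - hz q) ^ 2 + ht p ^ 2 + ht q ^ 2) / (2 * ht p * ht q).
Proof. unfold cosh_hdist. pose proof (ht_pos p). pose proof (ht_pos q). field. lra. Qed.

Lemma acosh_arg_ge1 (x : R) : 1 <= x -> 1 <= x + sqrt (x ^ 2 - 1).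
Proof. intros. pose proof (sqrt_pos (x ^ 2 - 1)). lra. Qed.

Lemma acosh_inj (a b : R) : 1 <= a -> 1 <= b -> acosh a = acosh b -> a = b.
Proof.
  intros Ha Hb E. pose proof (acosh_arg_ge1 a Ha). pose proof (acosh_arg_ge1 b Hb).
  apply ln_inv in E; [|lra|lra].
  destruct (Rtotal_order a b) as [L | [L | L]]; auto.
  - assert (sqrt (a ^ 2 - 1) <= sqrt (b ^ 2 - 1)) by (apply sqrt_le_1_alt; nra). lra.
  - assert (sqrt (b ^ 2 - 1) <= sqrt (a ^ 2 - 1)) by (apply sqrt_le_1_alt; nra). lra.
Qed.

Lemma acosh_1 : acosh 1 = 0.
Proof. unfold acosh. replace (1 ^ 2 - 1) with 0 by ring. rewrite sqrt_0, Rplus_0_r. apply ln_1. Qed.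

Lemma acosh_bounds (x : R) : 1 <= x -> 0 <= acosh x <= x - 1 + sqrt (x ^ 2 - 1).
Proof.
  intros Hx. pose proof (acosh_arg_ge1 x Hx). unfold acosh. split.
  - rewrite <- ln_1. apply ln_le; lra.
  - rewrite <- (ln_exp (x - 1 + sqrt (x ^ 2 - 1))). apply ln_le; [lra|].
    pose proof (exp_ineq1_le (x - 1 + sqrt (x ^ 2 - 1))). lra.
Qed.

Lemma acosh_le1 (x : R) : 1 <= x -> acosh x <= 1 -> x <= 3.
Proof.
  intros Hx H1. pose proof (acosh_arg_ge1 x Hx). unfold acosh in H1.
  assert (x + sqrt (x ^ 2 - 1) <= exp 1).
  { rewrite <- (exp_ln (x + sqrt (x ^ 2 - 1))) by lra.
    destruct H1 as [L | ->]; [left; apply exp_increasing, L | lra]. }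
  pose proof exp_le_3. pose proof (sqrt_pos (x ^ 2 - 1)). lra.
Qed.

Lemma is_lim_seq_acosh (u : nat -> R) : (forall n, 1 <= u n) -> is_lim_seq u 1 ->
  is_lim_seq (fun n => acosh (u n)) 0.
Proof.
  intros Hu L.
  apply is_lim_seq_le_le with (u := fun _ => 0) (w := fun n => u n - 1 + sqrt (u n ^ 2 - 1));
    [intros n; apply acosh_bounds, Hu | apply is_lim_seq_const |].
  replace (Finite 0) with (Finite (1 - 1 + sqrt (1 ^ 2 - 1)))
    by (f_equal; replace (1 ^ 2 - 1) with 0 by ring; rewrite sqrt_0; ring).
  apply is_lim_seq_plus'; [apply is_lim_seq_minus'; auto; apply is_lim_seq_const|].
  apply (is_lim_seq_continuous sqrt (fun n => u n ^ 2 - 1)); [apply continuity_pt_sqrt; lra|].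
  apply is_lim_seq_minus'; [|apply is_lim_seq_const].
  apply is_lim_seq_ext with (u := fun n => u n * (u n * 1)); [reflexivity|].
  replace (Finite (1 ^ 2)) with (Rbar_mult 1 (Rbar_mult 1 1)) by (simpl; f_equal; ring).
  apply is_lim_seq_mult'; auto. apply is_lim_seq_mult'; auto. apply is_lim_seq_const.
Qed.

Lemma h_isometry_cosh_hdist (F : H3 -> H3) : h_isometry F ->
  forall p q, cosh_hdist (F p) (F q) = cosh_hdist p q.
Proof.
  intros [HF _] p q. apply acosh_inj; try apply cosh_hdist_ge1. rewrite <- !hdist_acosh. apply HF.
Qed.

Lemma hdist_refl (x : H3) : hdist x x = 0.
Proof.
  rewrite hdist_acosh, <- acosh_1. f_equal. unfold cosh_hdist.
  replace (hz x - hz x)%C with (RtoC 0) by ring. rewrite Cmod_0.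
  pose proof (ht_pos x). field. lra.
Qed.

Lemma h_conv_same_height (x : nat -> H3) (p : H3) :
  (forall n, ht (x n) = ht p) -> is_lim_seq (fun n => Cmod (hz (x n) - hz p)) 0 -> h_conv x p.
Proof.
  intros Ht Hz. pose proof (ht_pos p).
  apply is_lim_seq_acosh; [intros; apply cosh_hdist_ge1|].
  apply is_lim_seq_ext with
    (u := fun n => 1 + (Cmod (hz (x n) - hz p) * Cmod (hz (x n) - hz p)) * / (2 * ht p * ht p)).
  { intros n. unfold cosh_hdist. rewrite Ht. field. lra. }
  replace (Finite 1) with (Finite (1 + 0 * 0 * / (2 * ht p * ht p))) by (f_equal; ring).
  apply is_lim_seq_plus'; [apply is_lim_seq_const|].
  apply is_lim_seq_mult'; [apply is_lim_seq_mult'; auto | apply is_lim_seq_const].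
Qed.

Lemma Cmod_sub_sq_bound (z w : C) :
  Rabs (Cmod (z - w) ^ 2 - Cmod w ^ 2) <= Cmod z ^ 2 + 2 * Cmod z * Cmod w.
Proof.
  assert (Hup : Cmod (z - w) <= Cmod z + Cmod w).
  { rewrite <- (Cmod_opp w). apply Cmod_triangle. }
  assert (Hlow : Cmod w <= Cmod z + Cmod (z - w)).
  { replace w with (z + - (z - w))%C at 1 by ring.
    rewrite <- (Cmod_opp (z - w)). apply Cmod_triangle. }
  pose proof (Cmod_ge_0 z). pose proof (Cmod_ge_0 w). pose proof (Cmod_ge_0 (z - w)).
  apply Rabs_le. split; nra.
Qed.

Lemma Rabs_sub_le_between (x a b : R) : Rabs (x - a) <= b -> a - b <= x <= a + b.
Proof.
  intros H. pose proof (Rle_abs (x - a)). pose proof (Rle_abs (- (x - a))).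
  rewrite Rabs_Ropp in *. lra.
Qed.

(** [2 t s cosh d((z, t), (w, s))] divided by [|w|^2 + s^2 + 1] is [1 + O(1/M)] for
    [M = |w| + s]. *)
Lemma cosh_hdist_factor_bound (z w : C) (t s : R) : 0 < s ->
  Rabs ((Cmod (z - w) ^ 2 + t ^ 2 + s ^ 2) / (Cmod w ^ 2 + s ^ 2 + 1) - 1) <=
  2 * (Cmod z ^ 2 + Rabs (t ^ 2 - 1)) * (/ (Cmod w + s) * / (Cmod w + s))
  + 4 * Cmod z * / (Cmod w + s).
Proof.
  intros Hs. pose proof (Cmod_ge_0 z) as Hz. pose proof (Cmod_ge_0 w) as Hw.
  set (M := Cmod w + s). assert (HM : 0 < M) by (unfold M; lra).
  set (Dn := Cmod w ^ 2 + s ^ 2 + 1).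
  assert (HDn : M * M / 2 <= Dn) by (pose proof (pow2_ge_0 (Cmod w - s)); unfold M, Dn; nra).
  set (c0 := Cmod z ^ 2 + Rabs (t ^ 2 - 1)).
  assert (Hnum : Rabs (Cmod (z - w) ^ 2 - Cmod w ^ 2 + (t ^ 2 - 1)) <= c0 + 2 * Cmod z * M).
  { eapply Rle_trans; [apply Rabs_triang|]. pose proof (Cmod_sub_sq_bound z w).
    unfold c0, M. nra. }
  replace ((Cmod (z - w) ^ 2 + t ^ 2 + s ^ 2) / Dn - 1)
    with ((Cmod (z - w) ^ 2 - Cmod w ^ 2 + (t ^ 2 - 1)) / Dn) by (unfold Dn; field; nra).
  rewrite Rabs_div, (Rabs_right Dn) by (unfold Dn; nra).
  apply Rle_trans with ((c0 + 2 * Cmod z * M) / (M * M / 2)).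
  - unfold Rdiv. apply Rmult_le_compat; auto using Rabs_pos.
    + left. apply Rinv_0_lt_compat. unfold Dn. nra.
    + apply Rinv_le_contravar; [nra | exact HDn].
  - right. field. lra.
Qed.

Lemma is_lim_seq_cosh_hdist_factor (z : C) (t : R) (w : nat -> C) (s : nat -> R) :
  (forall n, 0 < s n) -> is_lim_seq (fun n => Cmod (w n) + s n) p_infty ->
  is_lim_seq (fun n => (Cmod (z - w n) ^ 2 + t ^ 2 + s n ^ 2) / (Cmod (w n) ^ 2 + s n ^ 2 + 1)) 1.
Proof.
  intros Hs HM.
  pose proof (is_lim_seq_inv _ _ HM ltac:(discriminate)) as HiM. simpl in HiM.
  set (B := fun n => 2 * (Cmod z ^ 2 + Rabs (t ^ 2 - 1))
                     * (/ (Cmod (w n) + s n) * / (Cmod (w n) + s n))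
                     + 4 * Cmod z * / (Cmod (w n) + s n)).
  assert (HB : is_lim_seq B 0).
  { replace (Finite 0)
      with (Finite (2 * (Cmod z ^ 2 + Rabs (t ^ 2 - 1)) * (0 * 0) + 4 * Cmod z * 0))
      by (f_equal; ring).
    apply is_lim_seq_plus'; apply is_lim_seq_mult'; auto using is_lim_seq_const, is_lim_seq_mult'. }
  apply is_lim_seq_le_le with (u := fun n => 1 - B n) (w := fun n => 1 + B n).
  - intros n. pose proof (cosh_hdist_factor_bound z (w n) t (s n) (Hs n)) as Hb.
    apply Rabs_sub_le_between in Hb. unfold B. lra.
  - replace (Finite 1) with (Finite (1 - 0)) by (f_equal; ring).
    apply is_lim_seq_minus'; auto using is_lim_seq_const.
  - replace (Finite 1) with (Finite (1 + 0)) by (f_equal; ring).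
    apply is_lim_seq_plus'; auto using is_lim_seq_const.
Qed.

Lemma cosh_hdist_ratio_at_infinity (x y : H3) (q : nat -> H3) : to_bdry q None ->
  is_lim_seq (fun n => cosh_hdist x (q n) / cosh_hdist y (q n)) (ht y / ht x).
Proof.
  intros Hq. simpl in Hq.
  pose proof (ht_pos x). pose proof (ht_pos y).
  pose proof (is_lim_seq_cosh_hdist_factor (hz x) (ht x) _ _ (fun n => ht_pos (q n)) Hq) as Lx.
  pose proof (is_lim_seq_cosh_hdist_factor (hz y) (ht y) _ _ (fun n => ht_pos (q n)) Hq) as Ly.
  pose proof (is_lim_seq_scal_r _ (ht y / ht x) _ (is_lim_seq_div' _ _ _ _ Lx Ly ltac:(lra))) as L.
  replace (Rbar_mult (1 / 1) (ht y / ht x)) with (Finite (ht y / ht x)) in L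
    by (simpl; f_equal; field; lra).
  apply is_lim_seq_ext with (2 := L). intros n.
  rewrite !cosh_hdist_alt. pose proof (ht_pos (q n)).
  pose proof (pow2_ge_0 (Cmod (hz (q n)))). pose proof (pow2_ge_0 (ht (q n))).
  pose proof (pow2_ge_0 (Cmod (hz y - hz (q n)))). pose proof (pow2_ge_0 (Cmod (hz x - hz (q n)))).
  field. repeat split; nra.
Qed.

Lemma INR_S_pos (n : nat) : 0 < INR (S n).
Proof. apply lt_0_INR. lia. Qed.

Lemma is_lim_seq_INR_S : is_lim_seq (fun n => INR (S n)) p_infty.
Proof. apply (is_lim_seq_incr_1 INR), is_lim_seq_INR. Qed.

Lemma Cmod_sub_eq0 (x y : C) : Cmod (x - y) = 0 -> x = y.
Proof. intros H. apply Ceq_minus, Cmod_eq_0, H. Qed.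

Lemma is_lim_seq_const_eq (a b : R) : is_lim_seq (fun _ => a) b -> a = b.
Proof.
  intros H. apply is_lim_seq_unique in H. rewrite Lim_seq_const in H. injection H. auto.
Qed.

Definition similarity_ratio (F : C -> C) (r : R) : Prop :=
  forall z w, Cmod (F z - F w) = r * Cmod (z - w).

Lemma similarity_ratio_unique (F : C -> C) (r1 r2 : R) :
  similarity_ratio F r1 -> similarity_ratio F r2 -> r1 = r2.
Proof.
  intros H1 H2. specialize (H1 (RtoC 1) (RtoC 0)).
  rewrite H2, <- RtoC_minus, Cmod_R, Rminus_0_r, Rabs_R1 in H1. lra.
Qed.

Lemma similarity_ratio_comp (F1 F2 : C -> C) (r1 r2 : R) :
  similarity_ratio F1 r1 -> similarity_ratio F2 r2 ->
  similarity_ratio (fun z => F1 (F2 z)) (r1 * r2).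
Proof. intros H1 H2 z w. rewrite H1, H2. ring. Qed.

Lemma similarity_ratio_iter (F : C -> C) (r : R) (n : nat) :
  similarity_ratio F r -> similarity_ratio (Nat.iter n F) (r ^ n).
Proof.
  intros H. induction n as [|n IH]; intros z w; simpl; [ring|]. rewrite H, IH. ring.
Qed.

Lemma similarity_ratio_inverse (F F' : C -> C) (r r' : R) :
  similarity_ratio F r -> similarity_ratio F' r' -> (forall z, F' (F z) = z) -> r' * r = 1.
Proof.
  intros H H' HFF. apply (similarity_ratio_unique (fun z => F' (F z))).
  - apply similarity_ratio_comp; auto.
  - intros z w. rewrite !HFF. ring.
Qed.

Definition base_pt : H3 := mkH3 0%C 1 Rlt_0_1.

Section ExtensionFixingInfinity.

Variables (g : Sph -> Sph) (F : H3 -> H3).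
Hypothesis g_homeo : homeomorphism g.
Hypothesis g_infty : g None = None.
Hypothesis F_extends : extends g F.

(** Heights are compared through the limit of [cosh d(p, q) / cosh d(base_pt, q)] as [q]
    goes up the vertical line over [0] to [∞], a point that [F] fixes. *)
Lemma extends_ht (p : H3) : ht (F p) = ht (F base_pt) * ht p.
Proof.
  destruct F_extends as [Iso Bd].
  set (q := fun n => mkH3 0%C (INR (S n)) (INR_S_pos n)).
  assert (Hq : to_bdry q None).
  { apply is_lim_seq_ext with (2 := is_lim_seq_INR_S). intros n. simpl. rewrite Cmod_0. ring. }
  pose proof (Bd q None Hq) as HFq. rewrite g_infty in HFq.
  pose proof (cosh_hdist_ratio_at_infinity p base_pt q Hq) as L.
  pose proof (cosh_hdist_ratio_at_infinity (F p) (F base_pt) _ HFq) as LF.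
  apply is_lim_seq_ext with (v := fun n => cosh_hdist p (q n) / cosh_hdist base_pt (q n)) in LF;
    [|intros n; rewrite !(h_isometry_cosh_hdist F Iso); reflexivity].
  apply is_lim_seq_unique in L, LF. rewrite L in LF. injection LF as E. simpl in E.
  pose proof (ht_pos p). pose proof (ht_pos (F p)). pose proof (ht_pos (F base_pt)).
  apply (Rmult_eq_reg_r (/ ht (F p) * / ht p)).
  - replace (ht (F p) * (/ ht (F p) * / ht p)) with (1 / ht p) by (field; lra).
    rewrite E. field. lra.
  - apply Rmult_integral_contrapositive. split; apply Rinv_neq_0_compat; lra.
Qed.

(** Heights scale by a common factor, so the height term of [cosh d] is unchanged and the
    horizontal term must vanish. *)
Lemma extends_hz_vertical (p q : H3) : hz p = hz q -> hz (F p) = hz (F q).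
Proof.
  intros Hpq. pose proof (h_isometry_cosh_hdist F (proj1 F_extends) p q) as E.
  unfold cosh_hdist in E. rewrite (extends_ht p), (extends_ht q), Hpq in E.
  replace (hz q - hz q)%C with (RtoC 0) in E by ring. rewrite Cmod_0 in E.
  set (lam := ht (F base_pt)) in E. set (t := ht p) in E. set (s := ht q) in E.
  assert (Hl : 0 < lam) by apply ht_pos. assert (Ht : 0 < t) by apply ht_pos.
  assert (Hs : 0 < s) by apply ht_pos.
  set (A := Cmod (hz (F p) - hz (F q))) in E.
  assert (HA : A ^ 2 / (2 * (lam * t) * (lam * s)) = 0).
  { replace (1 + (A ^ 2 + (lam * t - lam * s) ^ 2) / (2 * (lam * t) * (lam * s)))
      with (1 + A ^ 2 / (2 * (lam * t) * (lam * s)) + (t - s) ^ 2 / (2 * t * s)) in E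
      by (field; lra).
    replace (1 + (0 ^ 2 + (t - s) ^ 2) / (2 * t * s)) with (1 + (t - s) ^ 2 / (2 * t * s)) in E
      by (field; lra).
    lra. }
  assert (HX : 0 < 2 * (lam * t) * (lam * s)) by (repeat apply Rmult_lt_0_compat; lra).
  assert (HA0 : A ^ 2 = 0).
  { replace (A ^ 2) with (A ^ 2 / (2 * (lam * t) * (lam * s)) * (2 * (lam * t) * (lam * s)))
      by (field; lra).
    rewrite HA. ring. }
  apply Cmod_sub_eq0, Rsqr_0_uniq. unfold Rsqr. rewrite <- HA0. fold A. ring.
Qed.

(** On the vertical line over [z], [F] stays on one vertical line, and going down to the
    boundary its points tend to [g z]. *)
Lemma extends_hz (p : H3) : hz (F p) = onC g (hz p).
Proof.
  set (q := fun n => mkH3 (hz p) (/ INR (S n)) (Rinv_0_lt_compat _ (INR_S_pos n))).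
  assert (Hq : to_bdry q (Some (hz p))).
  { split.
    - apply is_lim_seq_ext with (u := fun _ => 0); [|apply is_lim_seq_const].
      intros n. simpl. replace (hz p - hz p)%C with (RtoC 0) by ring. rewrite Cmod_0. reflexivity.
    - apply (is_lim_seq_inv _ _ is_lim_seq_INR_S). discriminate. }
  pose proof (proj2 F_extends q _ Hq) as HFq.
  rewrite (onC_Some g g_homeo g_infty) in HFq. destruct HFq as [HFq _].
  apply is_lim_seq_ext with (v := fun _ => Cmod (hz (F p) - onC g (hz p))) in HFq.
  - apply Cmod_sub_eq0, is_lim_seq_const_eq, HFq.
  - intros n. rewrite (extends_hz_vertical (q n) p); reflexivity.
Qed.

Lemma extends_similarity : similarity_ratio (onC g) (ht (F base_pt)).
Proof.
  intros z w. set (p := mkH3 z 1 Rlt_0_1). set (p' := mkH3 w 1 Rlt_0_1).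
  pose proof (h_isometry_cosh_hdist F (proj1 F_extends) p p') as E.
  rewrite !cosh_hdist_alt, (extends_ht p), (extends_ht p'), !extends_hz in E.
  unfold p, p' in E. cbn [hz ht] in E.
  set (lam := ht (F base_pt)) in *. assert (Hl : 0 < lam) by apply ht_pos.
  assert (Esq : Cmod (onC g z - onC g w) ^ 2 = (lam * Cmod (z - w)) ^ 2).
  { apply (Rmult_eq_reg_r (/ (2 * (lam * 1) * (lam * 1)))); [|apply Rinv_neq_0_compat; nra].
    transitivity ((Cmod (z - w) ^ 2 + 1 ^ 2 + 1 ^ 2) / (2 * 1 * 1) - 1); [|field; lra].
    rewrite <- E. field. lra. }
  pose proof (Cmod_ge_0 (onC g z - onC g w)). pose proof (Cmod_ge_0 (z - w)).
  apply Rsqr_inj; [auto | nra | rewrite !Rsqr_pow2; exact Esq].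
Qed.

End ExtensionFixingInfinity.

(** * Compactness and completeness *)

Fixpoint select_seq (c : nat -> nat -> nat) (k : nat) : nat :=
  match k with O => c O O | S k' => c k (S (select_seq c k')) end.

Lemma subseq_select (Q : nat -> nat -> Prop) :
  (forall k N, exists i, (N <= i)%nat /\ Q k i) ->
  exists phi : nat -> nat, (forall k, (phi k < phi (S k))%nat) /\ forall k, Q k (phi k).
Proof.
  intros H.
  set (c := fun k N => proj1_sig (constructive_indefinite_description _ (H k N))).
  assert (Hc : forall k N, (N <= c k N)%nat /\ Q k (c k N)).
  { intros k N. unfold c. destruct (constructive_indefinite_description _ (H k N)); auto. }
  exists (select_seq c). split.
  - intros k. simpl. destruct (Hc (S k) (S (select_seq c k))). lia.
  - intros [|k]; apply Hc.
Qed.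

Lemma strict_incr_ge (phi : nat -> nat) : (forall k, (phi k < phi (S k))%nat) ->
  forall k, (k <= phi k)%nat.
Proof. intros H k. induction k; [lia|]. specialize (H k). lia. Qed.

Lemma pigeonhole_infinitely_often (M : nat) (P : nat -> nat -> Prop) :
  (forall N, exists i, (N <= i)%nat /\ exists n, (n < M)%nat /\ P i n) ->
  exists n, (n < M)%nat /\ forall N, exists i, (N <= i)%nat /\ P i n.
Proof.
  induction M as [|M IH]; intros H.
  - destruct (H O) as [i [_ [n [Hn _]]]]. lia.
  - destruct (classic (forall N, exists i, (N <= i)%nat /\ P i M)) as [HM | HM].
    { exists M. split; auto. }
    apply not_all_ex_not in HM as [N0 HN0].
    destruct IH as [n [Hn Hinf]]; [|exists n; split; auto].
    intros N. destruct (H (max N N0)) as [i [Hi [n [Hn Pn]]]].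
    exists i. split; [lia|]. exists n. split; auto.
    destruct (Nat.eq_dec n M) as [->|]; [|lia].
    exfalso. apply HN0. exists i. split; auto. lia.
Qed.

Lemma list_cover_not_injective {A : Type} (k : nat -> A) (l : list A) :
  (forall n, In (k n) l) -> exists n m, (n < m)%nat /\ k n = k m.
Proof.
  intros H. apply NNPP. intros Hn.
  assert (Inj : Injective k).
  { intros a b E. destruct (Nat.lt_trichotomy a b) as [L | [L | L]]; auto;
      exfalso; apply Hn; [exists a, b | exists b, a]; auto. }
  assert (ND : NoDup (map k (seq 0 (S (length l))))).
  { apply Injective_map_NoDup; auto. apply seq_NoDup. }
  assert (Inc : incl (map k (seq 0 (S (length l)))) l).
  { intros a Ha. apply in_map_iff in Ha as [x [<- _]]. apply H. }
  pose proof (NoDup_incl_length ND Inc) as L. rewrite length_map, length_seq in L. lia.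
Qed.

Lemma hdist_le1_bound (x p : H3) : hdist x p <= 1 ->
  Cmod (hz x) + ht x + / ht x <= Cmod (hz p) + 11 * ht p + 6 / ht p.
Proof.
  intros Hd. rewrite hdist_acosh in Hd. apply acosh_le1 in Hd; [|apply cosh_hdist_ge1].
  unfold cosh_hdist in Hd. pose proof (ht_pos x) as Hx. pose proof (ht_pos p) as Hp.
  set (A := Cmod (hz x - hz p)) in Hd. assert (A0 : 0 <= A) by apply Cmod_ge_0.
  assert (K : A ^ 2 + (ht x - ht p) ^ 2 <= 4 * ht x * ht p).
  { assert (K1 : (A ^ 2 + (ht x - ht p) ^ 2) / (2 * ht x * ht p) <= 2) by lra.
    apply Rmult_le_compat_r with (r := 2 * ht x * ht p) in K1; [|nra].
    unfold Rdiv in K1. rewrite Rmult_assoc, Rinv_l in K1 by nra. lra. }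
  assert (T1 : ht x <= 6 * ht p) by nra.
  assert (T2 : ht p <= 6 * ht x) by nra.
  assert (TA : A <= 5 * ht p) by nra.
  assert (Tz : Cmod (hz x) <= Cmod (hz p) + A).
  { replace (hz x) with (hz p + (hz x - hz p))%C at 1 by ring. apply Cmod_triangle. }
  assert (Tinv : / ht x <= 6 / ht p).
  { apply (Rmult_le_reg_l (ht x * ht p)); [nra|].
    replace (ht x * ht p * / ht x) with (ht p) by (field; lra).
    replace (ht x * ht p * (6 / ht p)) with (6 * ht x) by (field; lra). lra. }
  lra.
Qed.

Lemma h_compact_bounded (K : H3 -> Prop) : h_compact K ->
  exists B, 0 < B /\ forall x, K x -> Cmod (hz x) + ht x + / ht x <= B.
Proof.
  intros HK. apply NNPP. intros Hn.
  set (size := fun x => Cmod (hz x) + ht x + / ht x).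
  assert (Hbig : forall n : nat, exists x, K x /\ INR n < size x).
  { intros n. apply NNPP. intros Hn2. apply Hn. exists (INR n + 1).
    split; [pose proof (pos_INR n); lra|].
    intros x Kx. apply Rnot_lt_le. intros L. apply Hn2. exists x. split; auto.
    unfold size. lra. }
  apply choice in Hbig as [xs Hxs].
  destruct (HK xs (fun n => proj1 (Hxs n))) as [phi [Hphi [p [_ Hc]]]].
  destruct (proj2 (is_lim_seq_spec _ _) Hc (mkposreal 1 Rlt_0_1)) as [N1 E1].
  destruct (proj2 (is_lim_seq_spec _ _) is_lim_seq_INR (Cmod (hz p) + 11 * ht p + 6 / ht p))
    as [N2 E2].
  set (n := max N1 N2). specialize (E1 n ltac:(lia)). specialize (E2 n ltac:(lia)).
  simpl in E1. rewrite Rminus_0_r in E1.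
  pose proof (Rle_abs (hdist (xs (phi n)) p)).
  pose proof (hdist_le1_bound (xs (phi n)) p ltac:(lra)).
  pose proof (proj2 (Hxs (phi n))). pose proof (le_INR _ _ (strict_incr_ge phi Hphi n)).
  unfold size in *. lra.
Qed.

Lemma h_conv_subseq_const (x : nat -> H3) (c : H3) :
  (forall N, exists i, (N <= i)%nat /\ x i = c) ->
  exists phi : nat -> nat, (forall n, (phi n < phi (S n))%nat) /\ h_conv (fun n => x (phi n)) c.
Proof.
  intros H. destruct (subseq_select (fun _ i => x i = c)) as [phi [Hphi Hc]]; [intros; apply H|].
  exists phi. split; auto. apply is_lim_seq_ext with (u := fun _ => 0); [|apply is_lim_seq_const].
  intros n. rewrite Hc. symmetry. apply hdist_refl.
Qed.

Lemma h_compact_convergent_seq (q : nat -> H3) (l : H3) :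
  h_conv q l -> h_compact (fun x => x = l \/ exists n, x = q n).
Proof.
  intros Hq x Hx.
  destruct (classic (forall k N, exists i, (N <= i)%nat /\
                       (x i = l \/ exists n, (k <= n)%nat /\ x i = q n))) as [Hfar | Hnear].
  - destruct (subseq_select _ Hfar) as [phi [Hphi Hsel]].
    exists phi. split; auto. exists l. split; [left; auto|].
    apply is_lim_seq_spec. intros eps.
    destruct (proj2 (is_lim_seq_spec _ _) Hq eps) as [N HN].
    exists N. intros k Hk. destruct (Hsel k) as [-> | [n [Hn ->]]].
    + rewrite hdist_refl, Rminus_0_r, Rabs_R0. apply cond_pos.
    + apply HN. lia.
  - apply not_all_ex_not in Hnear as [k Hk]. apply not_all_ex_not in Hk as [N0 HN0].
    destruct (pigeonhole_infinitely_often k (fun i n => x i = q n)) as [n [_ Hinf]].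
    + intros N. exists (max N N0). split; [lia|].
      destruct (Hx (max N N0)) as [E | [n E]].
      * exfalso. apply HN0. exists (max N N0). split; [lia | left; auto].
      * exists n. split; auto. destruct (Nat.lt_ge_cases n k) as [L | L]; auto.
        exfalso. apply HN0. exists (max N N0). split; [lia|]. right. exists n. auto.
    + destruct (h_conv_subseq_const x (q n) Hinf) as [phi [Hphi Hc]].
      exists phi. split; auto. exists (q n). split; auto. right. exists n. auto.
Qed.

Lemma Cmod_le_Rabs_sum (z : C) : Cmod z <= Rabs (fst z) + Rabs (snd z).
Proof.
  pose proof (Rabs_pos (fst z)). pose proof (Rabs_pos (snd z)).
  unfold Cmod. rewrite <- (sqrt_pow2 (Rabs (fst z) + Rabs (snd z))) by lra.
  apply sqrt_le_1_alt. rewrite <- (pow2_abs (fst z)), <- (pow2_abs (snd z)). nra.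
Qed.

Lemma C_cauchy_is_lim (u : nat -> C) :
  (forall eps : posreal, exists N, forall n m, (N <= n)%nat -> (N <= m)%nat ->
     Cmod (u n - u m) < eps) ->
  exists L, is_lim_seq (fun n => Cmod (u n - L)) 0.
Proof.
  intros Hu.
  assert (Hcoord : forall pr : C -> R, (forall z w, Rabs (pr z - pr w) <= Cmod (z - w)) ->
                   exists a : R, is_lim_seq (fun n => pr (u n)) a).
  { intros pr Hpr.
    assert (Hcau : ex_finite_lim_seq (fun n => pr (u n))).
    { apply ex_lim_seq_cauchy_corr. intros eps. destruct (Hu eps) as [N HN].
      exists N. intros n m Hn Hm. eapply Rle_lt_trans; [apply Hpr | apply HN; auto]. }
    destruct Hcau as [a Ha]. exists a. exact Ha. }
  destruct (Hcoord fst) as [a Ha]; [intros z w; apply (re_le_Cmod (z - w)%C)|].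
  destruct (Hcoord snd) as [b Hb].
  { intros z w. change (snd z - snd w) with (snd (z - w)%C).
    pose proof (Rmax_Cmod (z - w)%C).
    pose proof (Rmax_r (Rabs (fst (z - w)%C)) (Rabs (snd (z - w)%C))).
    lra. }
  exists (a, b).
  apply is_lim_seq_le_le with (u := fun _ => 0)
    (w := fun n => Rabs (fst (u n) - a) + Rabs (snd (u n) - b)).
  - intros n. split; [apply Cmod_ge_0 | apply Cmod_le_Rabs_sum].
  - apply is_lim_seq_const.
  - replace (Finite 0) with (Finite (0 + 0)) by (f_equal; ring).
    apply is_lim_seq_plus'; apply -> is_lim_seq_abs_0;
      [ replace (Finite 0) with (Finite (a - a)) by (f_equal; ring)
      | replace (Finite 0) with (Finite (b - b)) by (f_equal; ring) ];
      apply is_lim_seq_minus'; auto using is_lim_seq_const.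
Qed.

Section ContractionFixedPoint.

Variables (f : C -> C) (l : R).
Hypothesis l_range : 0 <= l < 1.
Hypothesis f_contraction : forall z w, Cmod (f z - f w) <= l * Cmod (z - w).

Let u (n : nat) : C := Nat.iter n f 0%C.

Lemma contraction_iter_tail (n k : nat) :
  Cmod (u (n + k) - u n) <= Cmod (u 1%nat - u 0%nat) * l ^ n / (1 - l).
Proof.
  set (d0 := Cmod (u 1%nat - u 0%nat)).
  assert (Hstep : forall m, Cmod (u (S m) - u m) <= l ^ m * d0).
  { induction m as [|m IH]; [unfold d0; simpl; lra|].
    apply Rle_trans with (l * Cmod (u (S m) - u m)); [apply f_contraction|].
    replace (l ^ S m * d0) with (l * (l ^ m * d0)) by (simpl; ring). apply Rmult_le_compat_l; lra. }
  assert (Hsum : Cmod (u (n + k) - u n) <= d0 * (l ^ n - l ^ (n + k)) / (1 - l)).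
  { induction k as [|k IH].
    - rewrite Nat.add_0_r. replace (u n - u n)%C with (RtoC 0) by ring. rewrite Cmod_0.
      right. field. lra.
    - rewrite Nat.add_succ_r.
      replace (u (S (n + k)) - u n)%C
        with ((u (S (n + k)) - u (n + k)) + (u (n + k) - u n))%C by ring.
      eapply Rle_trans; [apply Cmod_triangle|]. pose proof (Hstep (n + k)%nat).
      replace (d0 * (l ^ n - l ^ S (n + k)) / (1 - l))
        with (l ^ (n + k) * d0 + d0 * (l ^ n - l ^ (n + k)) / (1 - l)) by (simpl; field; lra).
      lra. }
  eapply Rle_trans; [exact Hsum|]. unfold Rdiv.
  apply Rmult_le_compat_r; [left; apply Rinv_0_lt_compat; lra|].
  pose proof (pow_le l (n + k) ltac:(lra)). assert (0 <= d0) by apply Cmod_ge_0. nra.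
Qed.

Lemma contraction_iter_cauchy (eps : posreal) :
  exists N, forall n m, (N <= n)%nat -> (N <= m)%nat -> Cmod (u n - u m) < eps.
Proof.
  set (d0 := Cmod (u 1%nat - u 0%nat)). assert (Hd0 : 0 <= d0) by apply Cmod_ge_0.
  destruct (pow_lt_1_zero l ltac:(rewrite Rabs_right; lra) (eps * (1 - l) / (d0 + 1))) as [N HN].
  { apply Rdiv_lt_0_compat; [apply Rmult_lt_0_compat; [apply cond_pos | lra] | lra]. }
  assert (Hsmall : forall n, (N <= n)%nat -> d0 * l ^ n / (1 - l) < eps).
  { intros n Hn. specialize (HN n Hn). rewrite Rabs_right in HN by (apply Rle_ge, pow_le; lra).
    apply (Rmult_lt_reg_r (1 - l)); [lra|].
    replace (d0 * l ^ n / (1 - l) * (1 - l)) with (d0 * l ^ n) by (field; lra).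
    apply (Rmult_lt_compat_r (d0 + 1)) in HN; [|lra].
    replace (eps * (1 - l) / (d0 + 1) * (d0 + 1)) with (eps * (1 - l)) in HN by (field; lra).
    pose proof (pow_le l n ltac:(lra)). nra. }
  exists N. intros n m Hn Hm.
  destruct (Nat.le_ge_cases n m) as [L | L].
  - replace m with (n + (m - n))%nat by lia. rewrite <- Cmod_opp, Copp_minus_distr.
    eapply Rle_lt_trans; [apply contraction_iter_tail | apply Hsmall; auto].
  - replace n with (m + (n - m))%nat by lia.
    eapply Rle_lt_trans; [apply contraction_iter_tail | apply Hsmall; auto].
Qed.

Lemma contraction_fixed_point : exists z0, f z0 = z0.
Proof.
  destruct (C_cauchy_is_lim u contraction_iter_cauchy) as [L HL].
  exists L. apply Cmod_sub_eq0.
  assert (Hbound : forall n, Cmod (f L - L) <= l * Cmod (u n - L) + Cmod (u (S n) - L)).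
  { intros n. replace (f L - L)%C with ((f L - f (u n)) + (u (S n) - L))%C by (simpl; ring).
    eapply Rle_trans; [apply Cmod_triangle|].
    rewrite <- Cmod_opp, Copp_minus_distr. pose proof (f_contraction (u n) L). lra. }
  assert (Hlim : is_lim_seq (fun n => l * Cmod (u n - L) + Cmod (u (S n) - L)) 0).
  { replace (Finite 0) with (Finite (l * 0 + 0)) by (f_equal; ring).
    apply is_lim_seq_plus'; [apply is_lim_seq_mult'; auto using is_lim_seq_const|].
    apply (is_lim_seq_incr_1 (fun n => Cmod (u n - L))), HL. }
  pose proof (is_lim_seq_le _ _ _ _ Hbound (is_lim_seq_const _) Hlim) as Hle.
  pose proof (Cmod_ge_0 (f L - L)). simpl in Hle. lra.
Qed.

End ContractionFixedPoint.


(** * Discrete groups fixing ∞ *)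

Definition conj_iter (f f' g : Sph -> Sph) (n : nat) : Sph -> Sph :=
  fun x => Nat.iter n f (g (Nat.iter n f' x)).

Lemma iter_None (f : Sph -> Sph) (n : nat) : f None = None -> Nat.iter n f None = None.
Proof. intros Hf. induction n as [|n IH]; simpl; [|rewrite IH]; auto. Qed.

Lemma conj_iter_None (f f' g : Sph -> Sph) (n : nat) :
  f None = None -> f' None = None -> g None = None -> conj_iter f f' g n None = None.
Proof. intros Hf Hf' Hg. unfold conj_iter. rewrite iter_None, Hg; auto using iter_None. Qed.

Lemma conj_iter_onC (f f' g : Sph -> Sph) (n : nat) (z : C) :
  homeomorphism f -> f None = None -> homeomorphism f' -> f' None = None ->
  homeomorphism g -> g None = None ->
  onC (conj_iter f f' g n) z = Nat.iter n (onC f) (onC g (Nat.iter n (onC f') z)).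
Proof.
  intros. apply onC_of_Some. unfold conj_iter. rewrite iter_Some, onC_Some, iter_Some; auto.
Qed.

Section LatticeFixingInfinity.

Variables (G : (Sph -> Sph) -> Prop) (act : (Sph -> Sph) -> H3 -> H3).
Hypothesis G_subgroup : subgroup_I G.
Hypothesis act_extends : forall g, G g -> extends g (act g).

Let dil (g : Sph -> Sph) : R := ht (act g base_pt).

Lemma lattice_homeo (g : Sph -> Sph) : G g -> homeomorphism g.
Proof. intros Gg. apply (proj1 G_subgroup g Gg). Qed.

Lemma lattice_ht (g : Sph -> Sph) (p : H3) : G g -> g None = None -> ht (act g p) = dil g * ht p.
Proof. intros Gg Hg. apply (extends_ht g); auto. Qed.

Lemma lattice_hz (g : Sph -> Sph) (p : H3) : G g -> g None = None -> hz (act g p) = onC g (hz p).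
Proof. intros Gg Hg. apply (extends_hz g); auto using lattice_homeo. Qed.

Lemma lattice_similarity (g : Sph -> Sph) :
  G g -> g None = None -> similarity_ratio (onC g) (dil g).
Proof. intros Gg Hg. apply (extends_similarity g); auto using lattice_homeo. Qed.

Lemma lattice_inverse_dil (g g' : Sph -> Sph) : G g -> G g' -> g None = None ->
  (forall x, g' (g x) = x) -> g' None = None /\ dil g' * dil g = 1.
Proof.
  intros Gg Gg' Hg Hg'g.
  assert (Hinf : g' None = None) by (rewrite <- Hg at 1; apply Hg'g).
  split; auto.
  apply (similarity_ratio_inverse (onC g) (onC g')); auto using lattice_similarity.
  intros z. apply onC_of_Some. rewrite <- onC_Some by auto using lattice_homeo. apply Hg'g.
Qed.

Lemma conj_iter_in_lattice (f f' g : Sph -> Sph) (n : nat) :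
  G f -> G f' -> G g -> G (conj_iter f f' g n).
Proof.
  destruct G_subgroup as [_ [Gid [Gcomp _]]]. intros Gf Gf' Gg.
  assert (Giter : forall h, G h -> forall m, G (fun x => Nat.iter m h x)).
  { intros h Gh m. induction m as [|m IH]; [exact Gid | exact (Gcomp _ _ Gh IH)]. }
  apply (Gcomp _ _ (Giter f Gf n)), (Gcomp _ _ Gg), Giter, Gf'.
Qed.

Lemma conj_iter_dil (f f' g : Sph -> Sph) (n : nat) :
  G f -> G f' -> G g -> f None = None -> g None = None -> (forall x, f' (f x) = x) ->
  dil (conj_iter f f' g n) = dil g.
Proof.
  intros Gf Gf' Gg Hf Hg Hf'f.
  destruct (lattice_inverse_dil f f' Gf Gf' Hf Hf'f) as [Hf' Hdil].
  pose proof (conj_iter_in_lattice f f' g n Gf Gf' Gg) as Gk.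
  pose proof (conj_iter_None f f' g n Hf Hf' Hg) as Hk.
  apply (similarity_ratio_unique (onC (conj_iter f f' g n))); [apply lattice_similarity; auto|].
  replace (dil g) with (dil f ^ n * (dil g * dil f' ^ n))
    by (rewrite Rmult_comm, Rmult_assoc, <- Rpow_mult_distr, Rmult_comm, Hdil, pow1; ring).
  assert (Hsim : similarity_ratio (fun z => Nat.iter n (onC f) (onC g (Nat.iter n (onC f') z)))
                                 (dil f ^ n * (dil g * dil f' ^ n))).
  { apply similarity_ratio_comp; [apply similarity_ratio_iter, lattice_similarity; auto|].
    apply (similarity_ratio_comp (onC g) (Nat.iter n (onC f')));
      [|apply similarity_ratio_iter]; apply lattice_similarity; auto. }
  intros z w. rewrite !conj_iter_onC by auto using lattice_homeo. apply Hsim.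
Qed.

Hypothesis act_proper : forall K, h_compact K ->
  exists l : list (Sph -> Sph), forall g, G g -> (exists x, K x /\ K (act g x)) -> In g l.

Lemma lattice_conv_orbit_repeats (k : nat -> Sph -> Sph) (p l : H3) :
  (forall n, G (k n)) -> h_conv (fun n => act (k n) p) l -> exists n m, (n < m)%nat /\ k n = k m.
Proof.
  intros Gk Hconv.
  set (q := fun n => match n with O => p | S n' => act (k n') p end).
  assert (Hq : h_conv q l) by (apply is_lim_seq_incr_1, Hconv).
  destruct (act_proper _ (h_compact_convergent_seq q l Hq)) as [lst Hlst].
  apply (list_cover_not_injective k lst). intros n. apply Hlst; auto.
  exists p. split; right; [exists 0%nat | exists (S n)]; reflexivity.
Qed.

Lemma lattice_common_fixed_point (g1 g : Sph -> Sph) (z0 : C) :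
  G g1 -> g1 None = None -> dil g1 < 1 -> onC g1 z0 = z0 ->
  G g -> g None = None -> onC g z0 = z0.
Proof.
  intros Gg1 Hg1 Hl Hz0 Gg Hg. apply NNPP. intros Ha.
  destruct (proj2 (proj2 (proj2 G_subgroup)) g1 Gg1) as [g1' [Gg1' [_ Hg1'g1]]].
  destruct (lattice_inverse_dil g1 g1' Gg1 Gg1' Hg1 Hg1'g1) as [Hg1' _].
  set (k := conj_iter g1 g1' g).
  assert (Gk : forall n, G (k n)) by (intros; apply conj_iter_in_lattice; auto).
  assert (Hk : forall n, k n None = None) by (intros; apply conj_iter_None; auto).
  assert (Hz0' : onC g1' z0 = z0).
  { rewrite <- Hz0 at 1. apply onC_of_Some. rewrite <- !onC_Some; auto using lattice_homeo. }
  set (a0 := onC g z0). set (l := dil g1) in *. assert (Hl0 : 0 < l) by apply ht_pos.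
  assert (Horbit : forall n, Cmod (onC (k n) z0 - z0) = l ^ n * Cmod (a0 - z0)).
  { intros n. unfold k. rewrite conj_iter_onC by auto using lattice_homeo.
    assert (Hfix : forall m h, onC h z0 = z0 -> Nat.iter m (onC h) z0 = z0)
      by (intros m h Hh; induction m; simpl; congruence).
    rewrite Hfix by auto. fold a0. rewrite <- (Hfix n g1) at 1 by auto.
    apply (similarity_ratio_iter (onC g1) l n), lattice_similarity; auto. }
  set (p0 := mkH3 z0 1 Rlt_0_1). set (qi := mkH3 z0 (dil g) (ht_pos _)).
  assert (Hconv : h_conv (fun n => act (k n) p0) qi).
  { apply h_conv_same_height.
    - intros n. rewrite lattice_ht by auto. unfold k. rewrite conj_iter_dil by auto. simpl. ring.
    - apply is_lim_seq_ext with (u := fun n => l ^ n * Cmod (a0 - z0)).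
      + intros n. rewrite lattice_hz, <- Horbit by auto. reflexivity.
      + replace (Finite 0) with (Rbar_mult 0 (Cmod (a0 - z0))) by (simpl; f_equal; ring).
        apply is_lim_seq_scal_r, is_lim_seq_geom. rewrite Rabs_right; lra. }
  destruct (lattice_conv_orbit_repeats k p0 qi Gk Hconv) as [n [m [Hnm Ekk]]].
  assert (Hpow : l ^ n * Cmod (a0 - z0) = l ^ m * Cmod (a0 - z0))
    by (rewrite <- !Horbit, Ekk; reflexivity).
  assert (Hd : 0 < Cmod (a0 - z0)) by (apply Cmod_gt_0; intros E; apply Ha, Ceq_minus, E).
  apply Rmult_eq_reg_r in Hpow; [|lra].
  replace m with (n + (m - n))%nat in Hpow by lia. rewrite pow_add in Hpow.
  pose proof (pow_lt l n Hl0). pose proof (pow_lt_1_compat l (m - n) ltac:(lra) ltac:(lia)).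
  nra.
Qed.

Hypothesis act_cocompact : exists K, h_compact K /\ forall y, exists g x, G g /\ K x /\ act g x = y.

Lemma lattice_contraction_or_moves_infinity : exists g, G g /\ (g None <> None \/ dil g < 1).
Proof.
  destruct act_cocompact as [K [HK Hcov]]. destruct (h_compact_bounded K HK) as [B [HB KB]].
  destruct (Hcov (mkH3 0%C (2 * B) ltac:(lra))) as [g0 [x [Gg0 [Kx Hx]]]].
  destruct (classic (g0 None = None)) as [Hg0 | Hmove]; [|exists g0; auto].
  assert (Hd0 : dil g0 <> 1).
  { intros E. pose proof (lattice_ht g0 x Gg0 Hg0) as Ht. rewrite Hx, E in Ht. simpl in Ht.
    pose proof (KB x Kx). pose proof (Cmod_ge_0 (hz x)). pose proof (Rinv_0_lt_compat _ (ht_pos x)).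
    lra. }
  destruct (Rlt_dec (dil g0) 1) as [Hlt | Hge]; [exists g0; auto|].
  destruct (proj2 (proj2 (proj2 G_subgroup)) g0 Gg0) as [g0' [Gg0' [_ Hg0'g0]]].
  destruct (lattice_inverse_dil g0 g0' Gg0 Gg0' Hg0 Hg0'g0) as [Hg0' Hdil].
  exists g0'. split; auto. right.
  pose proof (ht_pos (act g0' base_pt)). fold (dil g0') in *. nra.
Qed.

(** Elements fixing [∞] and [z0] move the bounded set [K] at most [B (B + |z0|)] away
    from [z0]. *)
Lemma lattice_no_common_fixed_pair (z0 : C) : exists g, G g /\ ~ (g None = None /\ onC g z0 = z0).
Proof.
  destruct act_cocompact as [K [HK Hcov]]. destruct (h_compact_bounded K HK) as [B [HB KB]].
  set (R0 := B * (B + Cmod z0) + 1).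
  destruct (Hcov (mkH3 (z0 + RtoC R0)%C 1 Rlt_0_1)) as [g [x [Gg [Kx Hx]]]].
  exists g. split; auto. intros [Hg Hgz0].
  pose proof (KB x Kx) as Bx. pose proof (ht_pos x). pose proof (Cmod_ge_0 (hz x)).
  pose proof (Cmod_ge_0 z0). pose proof (Rinv_0_lt_compat _ (ht_pos x)).
  pose proof (lattice_ht g x Gg Hg) as Ht. rewrite Hx in Ht. simpl in Ht.
  assert (Hdil : dil g <= B).
  { enough (dil g = / ht x) by lra.
    apply (Rmult_eq_reg_r (ht x)); [rewrite Rinv_l|]; lra. }
  pose proof (lattice_similarity g Gg Hg (hz x) z0) as Hs.
  rewrite Hgz0, <- lattice_hz, Hx in Hs by auto. simpl in Hs.
  replace (z0 + RtoC R0 - z0)%C with (RtoC R0) in Hs by ring.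
  rewrite Cmod_R, Rabs_right in Hs by (unfold R0; nra).
  assert (Cmod (hz x - z0) <= Cmod (hz x) + Cmod z0).
  { rewrite <- (Cmod_opp z0). apply Cmod_triangle. }
  pose proof (ht_pos (act g base_pt)). fold (dil g) in *.
  assert (dil g * Cmod (hz x - z0) <= B * (B + Cmod z0))
    by (apply Rmult_le_compat; try lra; apply Cmod_ge_0).
  unfold R0 in Hs. lra.
Qed.

End LatticeFixingInfinity.

Lemma nice_lattice_moves_infinity (G : (Sph -> Sph) -> Prop) :
  nice_lattice G -> exists g w, G g /\ g None = Some w.
Proof.
  intros [Gsub [act [Hext [_ [Hproper Hcocompact]]]]].
  apply NNPP. intros Hfix.
  assert (Hinf : forall g, G g -> g None = None).
  { intros g Gg. destruct (g None) as [w|] eqn:E; auto. exfalso. apply Hfix. exists g, w. auto. }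
  destruct (lattice_contraction_or_moves_infinity G act Gsub Hext Hcocompact)
    as [g1 [Gg1 [Hmove | Hl]]]; [exact (Hmove (Hinf g1 Gg1))|].
  destruct (contraction_fixed_point (onC g1) (ht (act g1 base_pt))) as [z0 Hz0].
  - split; [left; apply ht_pos | exact Hl].
  - intros z w. right. apply (lattice_similarity G act Gsub Hext); auto.
  - destruct (lattice_no_common_fixed_pair G act Gsub Hext Hcocompact z0) as [g [Gg Hg]].
    apply Hg. split; auto.
    apply (lattice_common_fixed_point G act Gsub Hext Hproper g1); auto.
Qed.

Theorem lemma1p6 (h : Sph -> Sph) (G1 G2 : (Sph -> Sph) -> Prop) :
  homeomorphism h -> h None = None ->
  nice_lattice G1 -> nice_lattice G2 ->
  (forall g, G2 g <-> exists g1, G1 g1 /\ forall x, g (h x) = h (g1 x)) ->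
  (exists v1 v2 : C, v1 <> 0%C /\ v2 <> 0%C /\
     (forall r : R, v2 <> (RtoC r * v1)%C) /\
     good_direction h v1 /\ good_direction h v2) ->
  conformal h.
Proof.
  intros Hh HN N1 N2 Hconj [v1 [v2 [Hv1 [_ [Hind [Gd1 Gd2]]]]]].
  destruct (good_directions_real_affine h v1 v2 Hh HN Hv1 Hind Gd1 Gd2) as [c [al [be Haff]]].
  apply (conformal_of_conjugation_moving_infinity h G1 G2 c al be Hh HN (proj1 N1) (proj1 N2)
           Hconj Haff).
  apply nice_lattice_moves_infinity, N1.
Qed.
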